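(* Let $(A_j)_{j\ge1}$ be a sequence of nonempty subsets of $\mathbb{Z}$ such that there is a positive integer $q$ with $A_j\subset A_{j+q}$ for all $j$, and such that $\sup_j|A_j|<\infty$. If there exists a sequence $(U_j)_{j\ge1}$ of subsets of $\mathbb{Z}$ with $A_j+U_j=A_{j+q}$ for all $j$, then $(A_j)_{j\ge1}$ is strongly eventually periodic.
   Context: For $B,C\subset\mathbb{Z}$, $B+C=\{b+c:b\in B,c\in C\}$. A sequence $(A_j)_{j\ge1}$ of nonempty subsets of $\mathbb{Z}$ is strongly eventually periodic (SEP) if there exist a positive integer $p$ and finite sequences of sets $(B_\ell)_{\ell=1}^p$, $(C_\ell)_{\ell=1}^p$ such that $(A_j)$ equals $B_1,\ldots,B_p$ followed by the infinite repetition of $B_1+C_1,\ldots,B_p+C_p$. *)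

(* Subsets of Z are predicates Z -> Prop; sequences of sets
   (A_j)_{j>=1} are functions nat -> (Z -> Prop), only indices j >= 1 matter. *)
From Stdlib Require Import ZArith List.
Open Scope Z_scope.

Definition zset := Z -> Prop.

Definition sumset (B C : zset) : zset :=
  fun x => exists b c, B b /\ C c /\ x = b + c.

Definition set_eq (X Y : zset) : Prop := forall x, X x <-> Y x.
Definition subset (X Y : zset) : Prop := forall x, X x -> Y x.

Definition card_le (X : zset) (M : nat) : Prop :=
  exists l : list Z, (length l <= M)%nat /\ forall x, X x -> In x l.

Definition SEP (A : nat -> zset) : Prop :=
  exists (p : nat) (B C : nat -> zset), (1 <= p)%nat /\
    (forall l, (1 <= l <= p)%nat -> set_eq (A l) (B l)) /\
    (forall k l, (1 <= k)%nat -> (1 <= l <= p)%nat ->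
        set_eq (A (k * p + l)%nat) (sumset (B l) (C l))).

(* Along each residue class r + nq the sets A_{r+nq} increase, and since their
   cardinality is bounded they are eventually constant; taking N beyond the
   stabilisation of all q classes gives A_{j+q} = A_j for j > Nq.  With
   p = (N+1)q, every A_{kp+l} (k >= 1) therefore equals A_{p+l}, and iterating
   A_{j+q} = A_j + U_j shows A_{p+l} = A_l + V for some V.  Any such V may be
   replaced by the canonical quotient {c : A_l + c is contained in A_{p+l}},
   which gives the sets C_l of the definition (with B_l = A_l). *)
From Stdlib Require Import ZArith List Lia Classical.

Lemma sumset_0r (X : zset) : set_eq (sumset X (fun z => z = 0)) X.
Proof.
  intro x; split.
  - intros [b [c [Hb [-> ->]]]]. now rewrite Z.add_0_r.
  - intro Hx. exists x, 0. repeat split; auto; lia.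
Qed.

Lemma sumset_assoc (X Y W : zset) :
  set_eq (sumset (sumset X Y) W) (sumset X (sumset Y W)).
Proof.
  intro x; split.
  - intros [b [w [[a [y [Ha [Hy ->]]]] [Hw ->]]]].
    exists a, (y + w). repeat split; auto; [|lia]. now exists y, w.
  - intros [a [v [Ha [[y [w [Hy [Hw ->]]]] ->]]]].
    exists (a + y), w. repeat split; auto; [|lia]. now exists a, y.
Qed.

Lemma sumset_eq_l (X X' Y : zset) :
  set_eq X X' -> set_eq (sumset X Y) (sumset X' Y).
Proof.
  intros HX x; split; intros [b [c [Hb [Hc ->]]]];
    exists b, c; repeat split; auto; apply HX, Hb.
Qed.

Definition sumset_quot (X Y : zset) : zset :=
  fun c => forall a, X a -> Y (a + c).

Lemma sumset_quotP (X Y : zset) :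
  (exists V, set_eq Y (sumset X V)) -> set_eq Y (sumset X (sumset_quot X Y)).
Proof.
  intros [V HV] x; split.
  - intro Hx. apply HV in Hx. destruct Hx as [a [v [Ha [Hv ->]]]].
    exists a, v. repeat split; auto.
    intros a' Ha'. apply HV. now exists a', v.
  - intros [a [c [Ha [Hc ->]]]]. now apply Hc.
Qed.

Definition increasing (X : nat -> zset) : Prop :=
  forall n m, (n <= m)%nat -> subset (X n) (X m).

Definition stable_from (X : nat -> zset) (n : nat) : Prop :=
  forall m, (n <= m)%nat -> subset (X m) (X n).

Lemma stable_from_le (X : nat -> zset) (n n' : nat) :
  increasing X -> stable_from X n -> (n <= n')%nat -> stable_from X n'.
Proof.
  intros Hincr Hn Hnn' m Hm x Hx.
  apply (Hincr n n' Hnn'), (Hn m); [lia | exact Hx].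
Qed.

Lemma nodup_length_le_card (Y : zset) (L : list Z) (M : nat) :
  NoDup L -> (forall x, In x L -> Y x) -> card_le Y M -> (length L <= M)%nat.
Proof.
  intros HL HLY [l [Hl HYl]].
  enough (length L <= length l)%nat by lia.
  apply NoDup_incl_length; [exact HL |]. intros x Hx. apply HYl, HLY, Hx.
Qed.

Section BoundedChain.

Variables (X : nat -> zset) (M : nat).
Hypothesis X_incr : increasing X.
Hypothesis X_bounded : forall n, card_le (X n) M.

Lemma not_stable_from_new_element (n : nat) :
  ~ stable_from X n -> exists m x, (n <= m)%nat /\ X m x /\ ~ X n x.
Proof.
  intro Hn. apply NNPP. intro Hnew. apply Hn. intros m Hm x Hx.
  apply NNPP. intro Hxn. apply Hnew. now exists m, x.
Qed.

Lemma unstable_chain_grows :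
  (forall n, ~ stable_from X n) ->
  forall k, exists n L, length L = k /\ NoDup L /\ forall x, In x L -> X n x.
Proof.
  intros Hunst k. induction k as [|k [n [L [HL [HN HLX]]]]].
  - exists 0%nat, nil. repeat split; [constructor | intros x []].
  - destruct (not_stable_from_new_element n (Hunst n)) as [m [x [Hnm [Hxm Hxn]]]].
    exists m, (x :: L). repeat split.
    + simpl; lia.
    + constructor; [intro Hin; apply Hxn, HLX, Hin | exact HN].
    + intros y [<- | Hy]; [exact Hxm |]. apply (X_incr n m Hnm), HLX, Hy.
Qed.

Lemma bounded_chain_stabilizes : exists n, stable_from X n.
Proof.
  apply NNPP. intro Hnone.
  assert (Hunst : forall n, ~ stable_from X n) by (intros n Hn; apply Hnone; now exists n).
  destruct (unstable_chain_grows Hunst (S M)) as [n [L [HL [HN HLX]]]].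
  pose proof (nodup_length_le_card (X n) L M HN HLX (X_bounded n)). lia.
Qed.

End BoundedChain.

Lemma stable_from_uniform (X : nat -> nat -> zset) (Q : nat) :
  (forall r, (1 <= r <= Q)%nat -> increasing (X r)) ->
  (forall r, (1 <= r <= Q)%nat -> exists n, stable_from (X r) n) ->
  exists N, forall r, (1 <= r <= Q)%nat -> stable_from (X r) N.
Proof.
  induction Q as [|Q IH]; intros Hincr Hstab.
  - exists 0%nat. intros r Hr. lia.
  - destruct IH as [N1 HN1]; [intros r Hr; apply Hincr; lia | intros r Hr; apply Hstab; lia |].
    destruct (Hstab (S Q)) as [N2 HN2]; [lia |].
    exists (Nat.max N1 N2). intros r Hr.
    destruct (Nat.eq_dec r (S Q)) as [-> | Hne].
    + apply (stable_from_le _ N2); [apply Hincr; lia | exact HN2 | lia].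
    + apply (stable_from_le _ N1); [apply Hincr; lia | apply HN1; lia | lia].
Qed.

Lemma residue_decomp (q j : nat) :
  (1 <= q)%nat -> (1 <= j)%nat -> exists r n, (1 <= r <= q)%nat /\ j = (r + n*q)%nat.
Proof.
  intros Hq Hj. exists (S ((j - 1) mod q)), ((j - 1) / q)%nat.
  pose proof (Nat.div_mod_eq (j - 1) q).
  pose proof (Nat.mod_upper_bound (j - 1) q ltac:(lia)).
  split; [lia | nia].
Qed.

Lemma shift_invariant_iter (X : nat -> zset) (q J : nat) :
  (forall j, (J < j)%nat -> set_eq (X (j + q)%nat) (X j)) ->
  forall j t, (J < j)%nat -> set_eq (X (j + t*q)%nat) (X j).
Proof.
  intros Hshift j t Hj. induction t as [|t IH]; intro x.
  - now rewrite Nat.mul_0_l, Nat.add_0_r.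
  - replace (j + S t * q)%nat with (j + t*q + q)%nat by lia.
    rewrite (Hshift (j + t*q)%nat ltac:(lia) x). apply IH.
Qed.

Lemma iterated_sumset (A : nat -> zset) (q : nat) (U : nat -> zset) :
  (forall j, (1 <= j)%nat -> set_eq (sumset (A j) (U j)) (A (j + q)%nat)) ->
  forall j t, (1 <= j)%nat -> exists V, set_eq (A (j + t*q)%nat) (sumset (A j) V).
Proof.
  intros HU j t Hj. induction t as [|t [V HV]].
  - exists (fun z => z = 0). intro x.
    rewrite Nat.mul_0_l, Nat.add_0_r, (sumset_0r (A j) x). tauto.
  - exists (sumset V (U (j + t*q)%nat)). intro x.
    replace (j + S t * q)%nat with (j + t*q + q)%nat by lia.
    rewrite <- (HU (j + t*q)%nat ltac:(lia) x), (sumset_eq_l _ _ _ HV x).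
    apply sumset_assoc.
Qed.

Section ResidueChains.

Variables (A : nat -> zset) (q : nat).
Hypothesis A_mono : forall j, (1 <= j)%nat -> subset (A j) (A (j + q)%nat).

Lemma residue_chain_increasing (r : nat) :
  (1 <= r)%nat -> increasing (fun n => A (r + n*q)%nat).
Proof.
  intros Hr n m Hnm. replace m with (n + (m - n))%nat by lia.
  induction (m - n)%nat as [|d IH]; intros x Hx.
  - now rewrite Nat.add_0_r.
  - replace (r + (n + S d) * q)%nat with (r + (n + d) * q + q)%nat by lia.
    apply A_mono; [lia | apply IH, Hx].
Qed.

Lemma eventually_shift_invariant (M : nat) :
  (1 <= q)%nat ->
  (forall j, (1 <= j)%nat -> card_le (A j) M) ->
  exists N, forall j, (N*q < j)%nat -> set_eq (A (j + q)%nat) (A j).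
Proof.
  intros q_pos Hcard.
  destruct (stable_from_uniform (fun r n => A (r + n*q)%nat) q) as [N HN].
  - intros r Hr. apply residue_chain_increasing; lia.
  - intros r Hr. apply (bounded_chain_stabilizes _ M).
    + apply residue_chain_increasing; lia.
    + intro n. apply Hcard; lia.
  - exists N. intros j Hj x.
    destruct (residue_decomp q j q_pos ltac:(lia)) as [r [n [Hr ->]]].
    assert (HNn : (N <= n)%nat) by nia.
    split; [| apply A_mono; lia].
    intro Hx. replace (r + n*q + q)%nat with (r + S n * q)%nat in Hx by lia.
    apply (residue_chain_increasing r ltac:(lia) N n HNn), (HN r Hr (S n)); [lia | exact Hx].
Qed.

End ResidueChains.

Theorem lemma5p10 (A : nat -> zset) (q : nat) :
  (forall j, (1 <= j)%nat -> exists x, A j x) ->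
  (1 <= q)%nat ->
  (forall j, (1 <= j)%nat -> subset (A j) (A (j + q)%nat)) ->
  (exists M : nat, forall j, (1 <= j)%nat -> card_le (A j) M) ->
  (exists U : nat -> zset, forall j, (1 <= j)%nat ->
      set_eq (sumset (A j) (U j)) (A (j + q)%nat)) ->
  SEP A.
Proof.
  intros _ Hq Hmono [M Hcard] [U HU].
  destruct (eventually_shift_invariant A q Hmono M Hq Hcard) as [N Hshift].
  set (p := ((N + 1) * q)%nat).
  exists p, A, (fun l => sumset_quot (A l) (A (p + l)%nat)).
  split; [unfold p; nia |]. split; [intros l _ x; tauto |].
  intros k l Hk Hl x.
  assert (Hperiod : set_eq (A (k*p + l)%nat) (A (p + l)%nat)).
  { replace (k*p + l)%nat with (p + l + ((k - 1) * (N + 1)) * q)%nat by (unfold p; nia).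
    apply (shift_invariant_iter A q (N*q) Hshift); unfold p; nia. }
  rewrite (Hperiod x). apply sumset_quotP.
  replace (p + l)%nat with (l + (N + 1) * q)%nat by (unfold p; lia).
  apply (iterated_sumset A q U HU); lia.
Qed.
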